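(* Let $E,A,B\in\mathbb{C}^{n,n}$ pairwise commute. Then there exists a nonsingular $U\in\mathbb{C}^{n,n}$ such that $$UEU^{-1}=\mathrm{diag}(J^E,N^E_2,N^E_3,N^E_4),\quad UAU^{-1}=\mathrm{diag}(A_1,J^A,N^A_3,N^A_4),\quad UBU^{-1}=\mathrm{diag}(B_1,B_2,J^B,N^B_4),$$ with conformable square diagonal blocks, where $J^E,J^A,J^B$ are nonsingular and $N^E_2,N^E_3,N^E_4,N^A_3,N^A_4,N^B_4$ are nilpotent. Moreover, if the triple $(E,A,B)$ is regular (i.e. $\det(\lambda E-A-\omega B)$ is not identically zero), then the fourth diagonal blocks are absent (have size zero).
   Context: Blocks of size zero are allowed. *)

From HB Require Import structures.
From mathcomp Require Import all_boot all_algebra.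
From mathcomp Require Import complex.
From mathcomp Require Import Rstruct.
From Stdlib Require Import Reals.
Set Implicit Arguments. Unset Strict Implicit. Unset Printing Implicit Defensive.
Import GRing.Theory Num.Theory.
Local Open Scope ring_scope.

Notation Cplx := (complex R).

Definition diag4 (F : nzRingType) (n1 n2 n3 n4 : nat)
  (M1 : 'M[F]_n1) (M2 : 'M[F]_n2) (M3 : 'M[F]_n3) (M4 : 'M[F]_n4)
  : 'M[F]_(n1 + (n2 + (n3 + n4))) :=
  block_mx M1 0 0 (block_mx M2 0 0 (block_mx M3 0 0 M4)).

(* A square matrix N is nilpotent: some power of it vanishes.
   (Blocks of size zero are allowed; they are trivially nilpotent.) *)
Definition nilpotent_mx (F : nzRingType) (m : nat) (N : 'M[F]_m) : Prop :=
  exists k : nat, N ^+ k = 0.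

Definition regular_triple (n : nat) (E A B : 'M[Cplx]_n) : Prop :=
  exists lambda omega : Cplx, \det (lambda *: E - A - omega *: B) != 0.

From HB Require Import structures.
From mathcomp Require Import all_boot all_algebra.
From mathcomp Require Import complex.
From mathcomp Require Import Rstruct.
From Stdlib Require Import Reals.
Import GRing.Theory Num.Theory.
Local Open Scope ring_scope.

Set Implicit Arguments. Unset Strict Implicit. Unset Printing Implicit Defensive.

(* Fitting's lemma: for M : 'M_n, the row space splits as the direct sum of
   the image and the kernel of M ^+ n.+1; both are invariant under every
   matrix commuting with M, and M is invertible on the first summand and
   nilpotent on the second.  Splitting the whole space with respect to E,
   then the nilpotent part of E with respect to A, then the common nilpotent
   part of E and A with respect to B, gives the four blocks.  On the last
   block E, A and B are commuting nilpotents, so lambda E - A - omega B is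
   nilpotent there; as it is also invertible there when the triple is
   regular, that block is empty. *)

Lemma commr_exprD_eq0 (R : pzRingType) (x y : R) i j :
  GRing.comm x y -> x ^+ i = 0 -> y ^+ j = 0 -> (x + y) ^+ (i + j) = 0.
Proof.
move=> cxy xi0 yj0; rewrite exprDn_comm //; apply: big1 => -[k /= _] _.
have [le_jk | lt_kj] := leqP j k.
  by rewrite -(subnKC le_jk) exprD yj0 mul0r mulr0 mul0rn.
have -> : (i + j - k)%nat = (i + (j - k))%nat by rewrite addnBA // ltnW.
by rewrite exprD xi0 !mul0r mul0rn.
Qed.

Section Nilpotent.
Variables (F : fieldType) (m : nat).
Implicit Types N M X Y : 'M[F]_m.

Lemma comm_mxZ a b X Y : comm_mx X Y -> comm_mx (a *: X) (b *: Y).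
Proof.
move=> cXY; rewrite /comm_mx -!scalemxAl -!scalemxAr !scalerA mulrC.
by congr (_ *: _).
Qed.

Lemma comm_mxX X Y k : comm_mx X Y -> comm_mx (X ^+ k) Y.
Proof. by move=> cXY; apply/commr_sym/commrX/commr_sym. Qed.

Lemma nilpotent_mxD N M :
  comm_mx N M -> nilpotent_mx N -> nilpotent_mx M -> nilpotent_mx (N + M).
Proof. by move=> cNM [i Ni] [j Mj]; exists (i + j)%nat; apply: commr_exprD_eq0. Qed.

Lemma nilpotent_mxZ a N : nilpotent_mx N -> nilpotent_mx (a *: N).
Proof.
move=> [k Nk]; exists k.
rewrite -mul_scalar_mx mulmxE exprMn_comm ?Nk ?mulr0 //.
by rewrite /GRing.comm -mulmxE scalar_mxC.
Qed.

Lemma nilpotent_unitmx_size0 N : N \in unitmx -> nilpotent_mx N -> m = 0%nat.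
Proof.
case: m N => // m' N /(unitrX _) unitNX [k Nk].
by move: (unitNX k); rewrite Nk unitr0.
Qed.

End Nilpotent.

Section Restriction.
Variables (F : fieldType) (n : nat).
Implicit Types V f g : 'M[F]_n.

Lemma stablemxX m (W : 'M[F]_(m, n)) f k : stablemx W f -> stablemx W (f ^+ k).
Proof.
move=> Wf; elim: k => [|k IHk]; first by rewrite expr0 mulmx1.
by rewrite exprSr; apply: stablemxM.
Qed.

Lemma stablemxZ V a f : stablemx V f -> stablemx V (a *: f).
Proof. by move=> Vf; rewrite -scalemxAr scalemx_sub. Qed.

Lemma restrictmx_mul V f :
  stablemx V f -> restrictmx V f *m row_base V = row_base V *m f.
Proof. by move=> Vf; rewrite mulmxKpV ?stablemx_row_base. Qed.

Lemma restrictmxX_mul V f k :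
  stablemx V f -> restrictmx V f ^+ k *m row_base V = row_base V *m f ^+ k.
Proof.
move=> Vf; elim: k => [|k IHk]; first by rewrite !expr0 mul1mx mulmx1.
by rewrite !exprSr -!mulmxE -mulmxA restrictmx_mul // mulmxA IHk mulmxA.
Qed.

Lemma nilpotent_restrictmx V f k :
  stablemx V f -> (V <= kermx (f ^+ k))%MS -> nilpotent_mx (restrictmx V f).
Proof.
move=> Vf Vker; exists k; apply: (row_free_inj (row_base_free V)) => /=.
by rewrite restrictmxX_mul // mul0mx; apply/sub_kermxP; rewrite eq_row_base.
Qed.

Lemma restrictmx_unit V f :
  stablemx V f -> \rank (V *m f) = \rank V -> restrictmx V f \in unitmx.
Proof.
move=> Vf rankVf; rewrite -row_free_unit /row_free eqn_leq rank_leq_row /=.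
apply: leq_trans (mxrankM_maxl _ (row_base V)).
by rewrite restrictmx_mul // (eqmxMr f (eq_row_base V)) rankVf.
Qed.

Lemma restrictmx_unitmx V f :
  stablemx V f -> f \in unitmx -> restrictmx V f \in unitmx.
Proof. by move=> Vf uf; rewrite restrictmx_unit // mxrankMfree ?row_free_unit. Qed.

Lemma restrictmx_comm V f g : stablemx V f -> stablemx V g -> comm_mx f g ->
  comm_mx (restrictmx V f) (restrictmx V g).
Proof.
by move=> Vf Vg cfg; rewrite /comm_mx -!conjmxM ?inE ?stablemx_row_base // cfg.
Qed.

End Restriction.

Section Fitting.
Variables (F : fieldType) (n : nat).
Implicit Types M W X : 'M[F]_n.

Lemma exprS_sub M k : (M ^+ k.+1 <= M ^+ k)%MS.
Proof. by rewrite exprS submxMl. Qed.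

Lemma exprS_eqmx_stable M k : \rank (M ^+ k.+1) = \rank (M ^+ k) ->
  forall j, (M ^+ (k + j) :=: M ^+ k)%MS.
Proof.
move=> rank_k.
have eq_k : (M ^+ k.+1 :=: M ^+ k)%MS.
  by apply/eqmxP; rewrite -(mxrank_leqif_eq (exprS_sub M k)) rank_k.
elim=> [|j IHj]; first by rewrite addn0.
rewrite addnS exprSr -mulmxE; apply: eqmx_trans (eqmxMr M IHj) _.
by rewrite mulmxE -exprSr.
Qed.

Lemma exprS_rank_stable M :
  exists2 k, (k <= n)%nat & \rank (M ^+ k.+1) = \rank (M ^+ k).
Proof.
(* As long as the rank of M ^+ k does not stabilise, it drops at each step. *)
suff [[k lt_kn rank_k] | ] : (exists2 k, k < n.+1 & \rank (M ^+ k.+1) = \rank (M ^+ k))%nat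
    \/ (\rank (M ^+ n.+1) + n.+1 <= n)%nat.
- by exists k.
- by rewrite addnS ltnNge leq_addl.
elim: n.+1 => [|k [[j lt_jk rank_j] | IHk]].
- by right; rewrite expr0 addn0 mxrank1.
- by left; exists j; first exact: ltnW.
- have := mxrankS (exprS_sub M k); rewrite leq_eqVlt => /orP[/eqP rank_k | lt_rank].
    by left; exists k.
  by right; rewrite addnS; apply: leq_trans IHk; rewrite ltn_add2r.
Qed.

Lemma fitting_cap_eq0 M : (M ^+ n.+1 :&: kermx (M ^+ n.+1))%MS = 0.
Proof.
apply/eqP/mxrank_injP; have [k le_kn rank_k] := exprS_rank_stable M.
rewrite mulmxE -exprD -(subnKC (leqW le_kn)) -addnA.
by rewrite !(exprS_eqmx_stable rank_k).
Qed.

Definition fitting_im M W := W *m M ^+ n.+1.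
Definition fitting_ker M W := (W :&: kermx (M ^+ n.+1))%MS.

Lemma mxrank_fitting M W :
  (\rank (fitting_im M W) + \rank (fitting_ker M W))%nat = \rank W.
Proof. exact: mxrank_mul_ker. Qed.

Lemma fitting_im_sub M W : stablemx W M -> (fitting_im M W <= W)%MS.
Proof. exact: stablemxX. Qed.

Lemma stablemx_fitting_im M W X :
  comm_mx M X -> stablemx W X -> stablemx (fitting_im M W) X.
Proof.
move=> cMX WX; rewrite /fitting_im -mulmxA (comm_mxX n.+1 cMX) mulmxA.
exact: submxMr.
Qed.

Lemma stablemx_fitting_ker M W X :
  comm_mx M X -> stablemx W X -> stablemx (fitting_ker M W) X.
Proof.
move=> cMX WX; rewrite sub_capmx (submx_trans (submxMr _ (capmxSl _ _)) WX).
exact: submx_trans (submxMr _ (capmxSr _ _)) (comm_mx_stable_ker (comm_mxX _ cMX)).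
Qed.

Lemma restrictmx_fitting_im_unit M W :
  stablemx W M -> restrictmx (fitting_im M W) M \in unitmx.
Proof.
move=> WM; apply: restrictmx_unit; first exact: stablemx_fitting_im.
apply/mxrank_injP; rewrite -submx0 -(fitting_cap_eq0 M) capmxS ?submxMl //.
by apply/sub_kermxP; rewrite exprS mulmxE mulrA -mulmxE mulmx_ker mul0mx.
Qed.

Lemma fitting_split M W m (R : 'M_(m, n)) :
  stablemx W M -> (R :=: fitting_ker M W)%MS ->
  (col_mx (row_base (fitting_im M W)) R :=: W)%MS.
Proof.
move=> WM defR.
have sub_W : (col_mx (row_base (fitting_im M W)) R <= W)%MS.
  by rewrite col_mx_sub eq_row_base fitting_im_sub // defR capmxSl.
have disjoint : (row_base (fitting_im M W) :&: R)%MS = 0.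
  apply/eqP; rewrite -submx0 -(fitting_cap_eq0 M).
  by rewrite capmxS ?eq_row_base ?submxMl // defR capmxSr.
apply/eqmxP; rewrite -(mxrank_leqif_eq sub_W) -addsmxE.
by rewrite mxrank_disjoint_sum // eq_row_base defR mxrank_fitting.
Qed.

End Fitting.

Section BlockDiagonal.
Variable F : fieldType.

Definition row_base4 n (V1 V2 V3 V4 : 'M[F]_n) :=
  col_mx (row_base V1) (col_mx (row_base V2) (col_mx (row_base V3) (row_base V4))).

Lemma row_base4_mul n (V1 V2 V3 V4 X : 'M[F]_n) :
  stablemx V1 X -> stablemx V2 X -> stablemx V3 X -> stablemx V4 X ->
  row_base4 V1 V2 V3 V4 *m X =
  diag4 (restrictmx V1 X) (restrictmx V2 X) (restrictmx V3 X) (restrictmx V4 X)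
    *m row_base4 V1 V2 V3 V4.
Proof.
move=> V1X V2X V3X V4X; rewrite /row_base4 /diag4.
by rewrite !(mul_block_col, mul_col_mx, mul_row_col, mul0mx, addr0, add0r) !restrictmx_mul.
Qed.

Lemma castmx_row_full_unit m n (Hm : m = n) (P : 'M[F]_(m, n)) :
  row_full P -> castmx (Hm, erefl n) P \in unitmx.
Proof. by case: n / Hm P => P; rewrite castmx_id -row_full_unit. Qed.

Lemma castmx_conj m n (Hm : m = n) (P : 'M[F]_(m, n)) (D : 'M_m) (X : 'M_n) :
  row_full P -> P *m X = D *m P ->
  castmx (Hm, erefl n) P *m X *m invmx (castmx (Hm, erefl n) P) = castmx (Hm, Hm) D.
Proof.
case: n / Hm P X => P X fullP PX; rewrite !castmx_id PX mulmxK //.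
by rewrite -row_full_unit.
Qed.

End BlockDiagonal.

Section CommonNilpotentBlock.
Variables (F : fieldType) (n : nat) (E A B V : 'M[F]_n).
Hypotheses (cEA : comm_mx E A) (cEB : comm_mx E B) (cAB : comm_mx A B).
Hypotheses (VE : stablemx V E) (VA : stablemx V A) (VB : stablemx V B).
Hypotheses (nilE : nilpotent_mx (restrictmx V E))
  (nilA : nilpotent_mx (restrictmx V A)) (nilB : nilpotent_mx (restrictmx V B)).

Lemma mxrank_common_nilpotent_eq0 l w :
  \det (l *: E - A - w *: B) != 0 -> \rank V = 0%nat.
Proof.
move=> det_neq0; set f := l *: E - A - w *: B.
have Vf : stablemx V f.
  by rewrite !stablemxD ?stablemxN ?stablemxZ.
have unit_f : f \in unitmx by rewrite unitmxE unitfE.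
apply: (nilpotent_unitmx_size0 (restrictmx_unitmx Vf unit_f)).
have -> : restrictmx V f = l *: restrictmx V E + (-1) *: restrictmx V A
                           + (- w) *: restrictmx V B.
  rewrite scaleN1r scaleNr /conjmx !mulmxBr !mulmxBl.
  by rewrite -!scalemxAr -!scalemxAl.
have cEA' := restrictmx_comm VE VA cEA.
have cEB' := restrictmx_comm VE VB cEB.
have cAB' := restrictmx_comm VA VB cAB.
apply: nilpotent_mxD; last exact: nilpotent_mxZ.
  by apply/comm_mx_sym/comm_mxD; apply: comm_mxZ; apply: comm_mx_sym.
by apply: nilpotent_mxD; [apply: comm_mxZ | apply: nilpotent_mxZ..].
Qed.

End CommonNilpotentBlock.

Section FittingBlocks.
Variables (F : fieldType) (n : nat) (E A B : 'M[F]_n).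
Hypotheses (cEA : comm_mx E A) (cEB : comm_mx E B) (cAB : comm_mx A B).

Let K1 := fitting_ker E 1%:M.
Let K2 := fitting_ker A K1.

Definition fitting_block1 := fitting_im E 1%:M.
Definition fitting_block2 := fitting_im A K1.
Definition fitting_block3 := fitting_im B K2.
Definition fitting_block4 := fitting_ker B K2.

Local Notation V1 := fitting_block1.
Local Notation V2 := fitting_block2.
Local Notation V3 := fitting_block3.
Local Notation V4 := fitting_block4.

Let stablemx_K X : comm_mx E X -> comm_mx A X -> stablemx K1 X /\ stablemx K2 X.
Proof.
move=> cEX cAX; have sK1 := stablemx_fitting_ker cEX (stableCmx 1 X).
by split; last exact: stablemx_fitting_ker.
Qed.

Lemma stablemx_fitting_blocks X : comm_mx E X -> comm_mx A X -> comm_mx B X ->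
  [/\ stablemx V1 X, stablemx V2 X, stablemx V3 X & stablemx V4 X].
Proof.
move=> cEX cAX cBX; have [sK1 sK2] := stablemx_K cEX cAX.
split; [exact: stablemx_fitting_im (stableCmx 1 X) | exact: stablemx_fitting_im
  | exact: stablemx_fitting_im | exact: stablemx_fitting_ker].
Qed.

Lemma mxrank_fitting_blocks : (\rank V1 + (\rank V2 + (\rank V3 + \rank V4)))%nat = n.
Proof.
have r3 : (\rank V3 + \rank V4)%nat = \rank K2 := mxrank_fitting B K2.
have r2 : (\rank V2 + \rank K2)%nat = \rank K1 := mxrank_fitting A K1.
have r1 : (\rank V1 + \rank K1)%nat = n := etrans (mxrank_fitting E 1%:M) (mxrank1 F n).
(* Rewriting with r3 and r2 would make unification unfold [\rank]. *)
exact: etrans (congr1 (addn _) (etrans (congr1 (addn _) r3) r2)) r1.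
Qed.

Lemma row_full_fitting_blocks : row_full (row_base4 V1 V2 V3 V4).
Proof.
have [sK1A _] := stablemx_K cEA (comm_mx_refl A).
have [_ sK2B] := stablemx_K cEB cAB.
have eq_K2 : (col_mx (row_base V3) (row_base V4) :=: K2)%MS :=
  fitting_split sK2B (eq_row_base V4).
have eq_K1 : (col_mx (row_base V2) (col_mx (row_base V3) (row_base V4)) :=: K1)%MS :=
  fitting_split sK1A eq_K2.
have eq_1 : (row_base4 V1 V2 V3 V4 :=: 1%:M)%MS := fitting_split (stableCmx 1 E) eq_K1.
by rewrite -sub1mx eq_1.
Qed.

Lemma unitmx_fitting_blocks :
  [/\ restrictmx V1 E \in unitmx, restrictmx V2 A \in unitmx & restrictmx V3 B \in unitmx].
Proof.
have [sK1A _] := stablemx_K cEA (comm_mx_refl A).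
have [_ sK2B] := stablemx_K cEB cAB.
split; apply: restrictmx_fitting_im_unit; [exact: stableCmx | exact: sK1A | exact: sK2B].
Qed.

Lemma nilpotent_fitting_blocks :
  [/\ nilpotent_mx (restrictmx V2 E), nilpotent_mx (restrictmx V3 E),
      nilpotent_mx (restrictmx V4 E), nilpotent_mx (restrictmx V3 A)
    & nilpotent_mx (restrictmx V4 A)] /\ nilpotent_mx (restrictmx V4 B).
Proof.
have [_ sV2E sV3E sV4E] :=
  stablemx_fitting_blocks (comm_mx_refl E) (comm_mx_sym cEA) (comm_mx_sym cEB).
have [_ _ sV3A sV4A] := stablemx_fitting_blocks cEA (comm_mx_refl A) (comm_mx_sym cAB).
have [_ _ _ sV4B] := stablemx_fitting_blocks cEB cAB (comm_mx_refl B).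
have [sK1A _] := stablemx_K cEA (comm_mx_refl A).
have [_ sK2B] := stablemx_K cEB cAB.
have K1_kerE : (K1 <= kermx (E ^+ n.+1))%MS := capmxSr _ _.
have K2_kerA : (K2 <= kermx (A ^+ n.+1))%MS := capmxSr _ _.
have K2_kerE : (K2 <= kermx (E ^+ n.+1))%MS := submx_trans (capmxSl _ _) K1_kerE.
have V3_K2 : (V3 <= K2)%MS := fitting_im_sub sK2B.
have V4_K2 : (V4 <= K2)%MS := capmxSl _ _.
split; first split.
- exact: nilpotent_restrictmx sV2E (submx_trans (fitting_im_sub sK1A) K1_kerE).
- exact: nilpotent_restrictmx sV3E (submx_trans V3_K2 K2_kerE).
- exact: nilpotent_restrictmx sV4E (submx_trans V4_K2 K2_kerE).
- exact: nilpotent_restrictmx sV3A (submx_trans V3_K2 K2_kerA).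
- exact: nilpotent_restrictmx sV4A (submx_trans V4_K2 K2_kerA).
- exact: nilpotent_restrictmx sV4B (capmxSr _ _).
Qed.

End FittingBlocks.

Theorem theorem5 (n : nat) (E A B : 'M[Cplx]_n) :
  E *m A = A *m E -> E *m B = B *m E -> A *m B = B *m A ->
  exists (n1 n2 n3 n4 : nat) (Hn : (n1 + (n2 + (n3 + n4)))%N = n)
         (U : 'M[Cplx]_n)
         (JE : 'M[Cplx]_n1) (NE2 : 'M[Cplx]_n2) (NE3 : 'M[Cplx]_n3) (NE4 : 'M[Cplx]_n4)
         (A1 : 'M[Cplx]_n1) (JA : 'M[Cplx]_n2) (NA3 : 'M[Cplx]_n3) (NA4 : 'M[Cplx]_n4)
         (B1 : 'M[Cplx]_n1) (B2 : 'M[Cplx]_n2) (JB : 'M[Cplx]_n3) (NB4 : 'M[Cplx]_n4),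
    [/\ U \in unitmx,
        [/\ U *m E *m invmx U = castmx (Hn, Hn) (diag4 JE NE2 NE3 NE4),
        U *m A *m invmx U = castmx (Hn, Hn) (diag4 A1 JA NA3 NA4)
        & U *m B *m invmx U = castmx (Hn, Hn) (diag4 B1 B2 JB NB4)],
        [/\ JE \in unitmx, JA \in unitmx & JB \in unitmx],
        ([/\ nilpotent_mx NE2, nilpotent_mx NE3, nilpotent_mx NE4,
            nilpotent_mx NA3 & nilpotent_mx NA4] /\ nilpotent_mx NB4)
      & (regular_triple E A B -> n4 = 0%N)].
Proof.
move=> cEA cEB cAB.
have [s1E s2E s3E s4E] :=
  stablemx_fitting_blocks (comm_mx_refl E) (comm_mx_sym cEA) (comm_mx_sym cEB).
have [s1A s2A s3A s4A] := stablemx_fitting_blocks cEA (comm_mx_refl A) (comm_mx_sym cAB).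
have [s1B s2B s3B s4B] := stablemx_fitting_blocks cEB cAB (comm_mx_refl B).
have full := row_full_fitting_blocks cEA cEB cAB.
have [nilE nilB4] := nilpotent_fitting_blocks cEA cEB cAB.
have Hn := mxrank_fitting_blocks E A B.
set V1 := fitting_block1 E; set V2 := fitting_block2 E A.
set V3 := fitting_block3 E A B; set V4 := fitting_block4 E A B.
exists _, _, _, _, Hn, (castmx (Hn, erefl n) (row_base4 V1 V2 V3 V4)).
exists (restrictmx V1 E), (restrictmx V2 E), (restrictmx V3 E), (restrictmx V4 E).
exists (restrictmx V1 A), (restrictmx V2 A), (restrictmx V3 A), (restrictmx V4 A).
exists (restrictmx V1 B), (restrictmx V2 B), (restrictmx V3 B), (restrictmx V4 B).
split; first exact: castmx_row_full_unit.
- split; apply: castmx_conj full _.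
  + exact: row_base4_mul s1E s2E s3E s4E.
  + exact: row_base4_mul s1A s2A s3A s4A.
  + exact: row_base4_mul s1B s2B s3B s4B.
- exact: unitmx_fitting_blocks.
- exact: conj nilE nilB4.
- have [_ _ nilE4 _ nilA4] := nilE; case=> l [w].
  exact: mxrank_common_nilpotent_eq0 cEA cEB cAB s4E s4A s4B nilE4 nilA4 nilB4 l w.
Qed.
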